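(* There is a deterministic algorithm for the Locate problem that runs in $k$ rounds and asks at most $k\,n^{1/k}$ rank queries on every input of length $n$.
   Context: Locate problem in the rank query model: there is a vector $\vec{x}=(x_1,\ldots,x_n)$ whose ranks form an unknown permutation of $\{1,\ldots,n\}$; an index $i$ is given and the goal is to determine $\mathrm{rank}(x_i)$. Queries have the form ''How is $\mathrm{rank}(x_j)$ compared to $m$?'' ($j,m\in\{1,\ldots,n\}$), with answer ''$<$'', ''$=$'' or ''$>$''. An algorithm runs in $k$ rounds if in each of $k$ rounds it submits a set of queries chosen depending only on answers of earlier rounds, then receives all their answers. *)

From Stdlib Require Import Reals.
From mathcomp Require Import all_boot all_fingroup.
Set Implicit Arguments. Unset Strict Implicit. Unset Printing Implicit Defensive.

(* Conventions (0-based encoding of the 1-based ranks of the paper):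
   - indices j : 'I_n stand for x_{j+1};
   - the unknown rank vector is a permutation s : {perm 'I_n}, with
     rank(x_{j+1}) = (s j) + 1;
   - a query (j, m) : 'I_n * 'I_n stands for
     "How is rank(x_{j+1}) compared to m+1?", i.e. compare s j with m. *)

Definition query (n : nat) := ('I_n * 'I_n)%type.

Definition answer (n : nat) (s : {perm 'I_n}) (q : query n) : comparison :=
  let: (j, m) := q in
  if (s j < m)%N then Lt else if s j == m then Eq else Gt.

Definition history (n : nat) := seq (seq (query n * comparison)).

(* A deterministic multi-round algorithm for Locate on inputs of length n:
   given the target index i and the answers of the earlier rounds, it chooses
   the (finite) list of queries of the next round; at the end it outputs the
   rank (0-based) from the full history. *)
Record algorithm (n : nat) := Algorithm {
  alg_queries : 'I_n -> history n -> seq (query n);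
  alg_output  : 'I_n -> history n -> 'I_n }.

Fixpoint run_rounds (n : nat) (A : algorithm n) (i : 'I_n) (s : {perm 'I_n})
    (r : nat) (h : history n) : history n :=
  match r with
  | 0 => h
  | r'.+1 =>
      let qs := alg_queries A i h in
      run_rounds A i s r' (rcons h [seq (q, answer s q) | q <- qs])
  end.

Definition transcript (n : nat) (A : algorithm n) (k : nat) (i : 'I_n)
    (s : {perm 'I_n}) : history n := run_rounds A i s k [::].

Definition num_queries (n : nat) (h : history n) : nat := sumn (map size h).

From Stdlib Require Import Reals.
From mathcomp Require Import all_boot all_fingroup zify.
Set Implicit Arguments. Unset Strict Implicit. Unset Printing Implicit Defensive.

(* Choose the least b with n <= b^k and read rank(x_i) in base b, one digit
   per round: if rank(x_i) is known to lie in a block [L, L + b^(k-r)) before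
   round r, the b - 1 queries at L + c b^(k-r-1), 0 < c < b, locate the
   sub-block of length b^(k-r-1) containing it.  After k rounds the block has
   length 1, and k (b - 1) <= k n^(1/k) because (b - 1)^k < n. *)

Definition not_Lt (a : comparison) : bool := if a is Lt then false else true.

Lemma not_Lt_answer n (s : {perm 'I_n}) (j m : 'I_n) :
  not_Lt (answer s (j, m)) = (m <= s j).
Proof. by rewrite /answer; case: ltnP; case: (s j == m). Qed.

Definition lower_bound n (h : history n) : nat :=
  \max_(e <- flatten h | not_Lt e.2) (e.1.2 : nat).

Lemma lower_bound_rcons n (h : history n) round :
  lower_bound (rcons h round) =
  maxn (lower_bound h) (\max_(e <- round | not_Lt e.2) (e.1.2 : nat)).
Proof. by rewrite /lower_bound flatten_rcons big_cat. Qed.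

Lemma num_queries_run_rounds_le n (A : algorithm n) i s q r h :
  (forall h', size (alg_queries A i h') <= q) ->
  num_queries (run_rounds A i s r h) <= num_queries h + r * q.
Proof.
move=> Aq; elim: r h => [|r IH] h /=; first by rewrite addn0.
apply: leq_trans (IH _) _.
rewrite /num_queries map_rcons -cats1 sumn_cat /= addn0 size_map mulSn addnA.
by rewrite leq_add2r leq_add2l.
Qed.

Lemma bigmax_inord n (T : eqType) (r : seq T) (f : T -> nat) (x : nat) :
  x <= n ->
  \max_(c <- r | @inord n (f c) <= x) (@inord n (f c) : nat) =
  \max_(c <- r | f c <= x) f c.
Proof.
move=> xn; rewrite !(big_mkcond (fun c => _ <= x)) /=.
apply: eq_bigr => c _; rewrite val_insubd.
case: ltnP => // fc; rewrite leq0n.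
by have /negbTE -> : ~~ (f c <= x) by rewrite -ltnNge (leq_ltn_trans xn).
Qed.

(* L is x rounded down to a multiple of b B; the probes L + c B, 0 < c < b,
   refine this to x rounded down to a multiple of B. *)
Lemma bigmax_round_down (b B x : nat) : 0 < b -> 0 < B ->
  let L := x %/ (b * B) * (b * B) in
  maxn L (\max_(c <- iota 1 b.-1 | L + c * B <= x) (L + c * B)) = x %/ B * B.
Proof.
move=> b_gt0 B_gt0 L.
have -> : L = x %/ B %/ b * b * B by rewrite /L (mulnC b) divnMA mulnA mulnAC.
set q := x %/ B.
have qB_le : q * B <= x by exact: leq_divM.
apply/eqP; rewrite eqn_leq geq_max -andbA; apply/and3P; split.
- by rewrite leq_mul2r leq_divM orbT.
- apply/bigmax_leqP_seq => c _.
  by rewrite -mulnDl leq_mul2r -leq_divRL // -/q => ->; rewrite orbT.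
- have q_eq : q = q %/ b * b + q %% b by exact: divn_eq.
  case r_eq: (q %% b) => [|r].
    by rewrite {1}q_eq r_eq addn0 leq_maxl.
  apply: leq_trans (leq_maxr _ _).
  have <- : q %/ b * b * B + r.+1 * B = q * B by rewrite -mulnDl -r_eq -q_eq.
  apply: (bigmaxn_sup_seq r.+1) => //; last by rewrite -mulnDl -r_eq -q_eq.
  have := ltn_mod q b; rewrite b_gt0 r_eq mem_iota; lia.
Qed.

Section BlockSearch.
Variables (k b n : nat).

(* Probes beyond the last rank are mapped to rank 0 by [inord]; their answer
   is never [Lt], so they do not raise the lower bound. *)
Definition block_probes (i : 'I_n.+1) (h : history n.+1) : seq (query n.+1) :=
  [seq (i, inord (lower_bound h + c * b ^ (k - (size h).+1))) | c <- iota 1 b.-1].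

Definition block_search : algorithm n.+1 :=
  Algorithm block_probes (fun i h => inord (lower_bound h)).

Lemma size_block_probes i h : size (block_probes i h) = b.-1.
Proof. by rewrite size_map size_iota. Qed.

Variables (i : 'I_n.+1) (s : {perm 'I_n.+1}).
Hypothesis b_gt0 : 0 < b.

Let floor_after (r : nat) : nat := s i %/ b ^ (k - r) * b ^ (k - r).

Lemma lower_bound_block_round h : size h < k -> lower_bound h = floor_after (size h) ->
  lower_bound (rcons h [seq (q, answer s q) | q <- block_probes i h]) =
  floor_after (size h).+1.
Proof.
move=> h_lt lb_h; rewrite lower_bound_rcons !big_map.
under eq_bigl do rewrite not_Lt_answer.
rewrite /= (bigmax_inord _ (fun c => lower_bound h + c * _)); last by rewrite -ltnS.
rewrite lb_h /floor_after.
have -> : b ^ (k - size h) = b * b ^ (k - (size h).+1) by rewrite -expnS; congr expn; lia.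
by rewrite bigmax_round_down // expn_gt0 b_gt0.
Qed.

Lemma lower_bound_block_run r h : size h + r <= k ->
  lower_bound h = floor_after (size h) ->
  lower_bound (run_rounds block_search i s r h) = floor_after (size h + r).
Proof.
elim: r h => [|r IH] h hr lb_h /=; first by rewrite addn0.
rewrite IH size_rcons ?addSnnS // lower_bound_block_round //; lia.
Qed.

Lemma block_search_correct : n.+1 <= b ^ k ->
  alg_output block_search i (transcript block_search k i s) = s i.
Proof.
move=> n_le; apply: val_inj.
rewrite /= /transcript lower_bound_block_run // /floor_after.
  by rewrite subnn expn0 divn1 muln1 inordK.
by rewrite /lower_bound big_nil subn0 divn_small // (leq_trans _ n_le).
Qed.

End BlockSearch.

Lemma ceil_root_exists k n : 0 < k -> 0 < n ->
  exists b, [/\ 0 < b, n <= b ^ k & b.-1 ^ k < n].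
Proof.
move=> k_gt0 n_gt0.
have ex_b : exists b, n <= b ^ k.
  exists n; case: k k_gt0 => // k' _.
  by rewrite expnS leq_pmulr // expn_gt0 n_gt0.
case: (ex_minnP ex_b) => b n_le b_min.
have b_gt0 : 0 < b by case: b n_le {b_min} => //; rewrite exp0n // leqNgt n_gt0.
exists b; split => //; rewrite ltnNge; apply/negP => /b_min.
by case: b b_gt0 {n_le b_min} => // b _; rewrite ltnn.
Qed.

Lemma INR_expn m e : INR (m ^ e) = pow (INR m) e.
Proof. by elim: e => [|e IH] //=; rewrite expnS mult_INR IH. Qed.

Lemma INR_le_Rpower_inv k c n : 0 < k -> c ^ k <= n ->
  Rle (INR c) (Rpower (INR n) (Rinv (INR k))).
Proof.
move=> k_gt0 ck_le.
have kR_gt0 : Rlt 0 (INR k) by apply: lt_0_INR; apply/ltP.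
case: c ck_le => [|c] ck_le; first by apply: Rlt_le; apply: exp_pos.
have cR_gt0 : Rlt 0 (INR c.+1) by apply: lt_0_INR; apply/ltP.
rewrite -[INR c.+1](Rpower_1 _ cR_gt0) -(Rinv_r (INR k)); last exact: Rgt_not_eq.
rewrite -Rpower_mult Rpower_pow // -INR_expn.
apply: Rle_Rpower_l; first by apply: Rlt_le; apply: Rinv_0_lt_compat.
split; first by apply: lt_0_INR; apply/ltP; rewrite expn_gt0.
by apply: le_INR; apply/leP.
Qed.

Theorem proposition1 (k : nat) (hk : (0 < k)%N) (n : nat) :
  exists A : algorithm n,
    forall (i : 'I_n) (s : {perm 'I_n}),
      alg_output A i (transcript A k i s) = s i /\
      Rle (INR (num_queries (transcript A k i s)))
          (Rmult (INR k) (Rpower (INR n) (Rinv (INR k)))).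
Proof.
case: n => [|n]; first by exists (Algorithm (fun _ _ => [::]) (fun i _ => i)); case.
have [b [b_gt0 n_le b_pred_lt]] := ceil_root_exists hk (ltn0Sn n).
exists (block_search k b n) => i s; split; first exact: block_search_correct.
have num_le : num_queries (transcript (block_search k b n) k i s) <= k * b.-1.
  by apply: num_queries_run_rounds_le => h; rewrite size_block_probes.
apply: Rle_trans (le_INR _ _ (elimT leP num_le)) _.
rewrite mult_INR; apply: Rmult_le_compat_l; first exact: pos_INR.
exact: INR_le_Rpower_inv (ltnW b_pred_lt).
Qed.
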